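(* Let $M\preceq\mathbb{C}$ be small, $C\supseteq M$ full, and suppose $\langle A,B\rangle$ is an $M$-f.s. sequence over $C$. Let $B=B_1\sqcup B_2$ be any partition of $B$. Then $\langle A,B_1,B_2\rangle$ is an $M$-f.s. sequence over $C$ if and only if $\langle B_1,B_2\rangle$ is an $M$-f.s. sequence over $C$.
   Context: Work in a monster model $\mathbb{C}$ of an arbitrary complete theory. For $D\supseteq M$, $\mathrm{tp}(X/D)$ is finitely satisfied in $M$ if each of its formulas is satisfied by a tuple from $M$. $C\supseteq M$ is full if every type in $S_n(M)$, for every $n$, is realized in $C$. An $M$-f.s. sequence over $C$ is a sequence of sets $\langle A_i:i\in I\rangle$ with $\mathrm{tp}(A_i/A_{<i}C)$ finitely satisfied in $M$ for every $i$, where $A_{<i}=\bigcup_{j<i}A_j$. *)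

From Stdlib Require Import List Arith Fin.
Import ListNotations.

Record lang := {
  funs : Type; fun_ar : funs -> nat;
  rels : Type; rel_ar : rels -> nat }.

Inductive term (L : lang) : Type :=
| Var : nat -> term L
| App : forall f : funs L, (Fin.t (fun_ar L f) -> term L) -> term L.

Inductive formula (L : lang) : Type :=
| FEq : term L -> term L -> formula L
| FRel : forall r : rels L, (Fin.t (rel_ar L r) -> term L) -> formula L
| FNeg : formula L -> formula L
| FAnd : formula L -> formula L -> formula L
| FEx : nat -> formula L -> formula L.   (* FEx n phi = exists x_n, phi *)

Arguments Var {L}. Arguments App {L}. Arguments FEq {L}. Arguments FRel {L}.
Arguments FNeg {L}. Arguments FAnd {L}. Arguments FEx {L}.

Record structure (L : lang) (U : Type) := {
  st_inh : inhabited U;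
  st_fun : forall f : funs L, (Fin.t (fun_ar L f) -> U) -> U;
  st_rel : forall r : rels L, (Fin.t (rel_ar L r) -> U) -> Prop }.
Arguments st_fun {L U}. Arguments st_rel {L U}.

Section Sem.
Context {L : lang} {U : Type} (S : structure L U).

Fixpoint eval (s : nat -> U) (t : term L) : U :=
  match t with
  | Var n => s n
  | App f a => st_fun S f (fun i => eval s (a i))
  end.

Definition upd (s : nat -> U) (n : nat) (u : U) : nat -> U :=
  fun k => if Nat.eqb k n then u else s k.

Fixpoint sat_in (P : U -> Prop) (s : nat -> U) (phi : formula L) : Prop :=
  match phi with
  | FEq t1 t2 => eval s t1 = eval s t2
  | FRel r a => st_rel S r (fun i => eval s (a i))
  | FNeg p => ~ sat_in P s p
  | FAnd p q => sat_in P s p /\ sat_in P s q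
  | FEx n p => exists u, P u /\ sat_in P (upd s n u) p
  end.

Definition sat (s : nat -> U) (phi : formula L) : Prop :=
  sat_in (fun _ => True) s phi.

Definition elem_sub (M : U -> Prop) : Prop :=
  (exists m, M m) /\
  (forall f (a : Fin.t (fun_ar L f) -> U), (forall i, M (a i)) -> M (st_fun S f a)) /\
  (forall (phi : formula L) (s : nat -> U), (forall k, M (s k)) ->
     (sat s phi <-> sat_in M s phi)).

Definition override (n : nat) (e s : nat -> U) : nat -> U :=
  fun k => if Nat.ltb k n then e k else s k.

(* A set of formulas in the variables x_0..x_{n-1} with parameters
   (the values of the other variables) from A. *)
Definition params_in (A : U -> Prop) (p : (formula L * (nat -> U)) -> Prop) :=
  forall phi s, p (phi, s) -> forall k, A (s k).

Definition realizes_n (n : nat) (e : nat -> U) (p : (formula L * (nat -> U)) -> Prop) :=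
  forall phi s, p (phi, s) -> sat (override n e s) phi.

(* consistent = finitely satisfiable in S (equivalently consistent with the
   elementary diagram, since the parameters live in a subset of S) *)
Definition fin_sat_n (n : nat) (p : (formula L * (nat -> U)) -> Prop) :=
  forall l : list (formula L * (nat -> U)), (forall x, In x l -> p x) ->
    exists e, forall phi s, In (phi, s) l -> sat (override n e s) phi.

Definition complete_type (M : U -> Prop) (n : nat) p :=
  params_in M p /\ fin_sat_n n p /\
  (forall phi s, (forall k, M (s k)) -> p (phi, s) \/ p (FNeg phi, s)).

Definition full (M C : U -> Prop) : Prop :=
  forall n p, complete_type M n p ->
    exists e, (forall k, k < n -> C (e k)) /\ realizes_n n e p.

(* tp(X/D) is finitely satisfied in M: whenever phi(x-bar, d-bar) holds with
   the variables in V assigned elements of X and all other variables assigned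
   parameters from D, then some tuple from M (assigned to the variables in V)
   also satisfies phi(x-bar, d-bar). *)
Definition fs_in (M X D : U -> Prop) : Prop :=
  forall (phi : formula L) (s : nat -> U) (V : list nat),
    (forall v, In v V -> X (s v)) ->
    (forall v, ~ In v V -> D (s v)) ->
    sat s phi ->
    exists s', (forall v, In v V -> M (s' v)) /\
               (forall v, ~ In v V -> s' v = s v) /\ sat s' phi.

(* <A_0, ..., A_k> (a finite sequence of sets) is an M-f.s. sequence over C:
   tp(A_i / A_{<i} C) is finitely satisfied in M for every i. *)
Fixpoint fs_seq_from (M prev : U -> Prop) (l : list (U -> Prop)) : Prop :=
  match l with
  | [] => True
  | A :: l' => fs_in M A prev /\
               fs_seq_from M (fun u => prev u \/ A u) l'
  end.

Definition fs_seq (M C : U -> Prop) (l : list (U -> Prop)) : Prop :=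
  fs_seq_from M C l.

(* Cardinalities, with a cardinal represented by a type K. *)
Definition card_lt (X : U -> Prop) (K : Type) : Prop :=
  (exists f : {x | X x} -> K, forall a b, f a = f b -> a = b) /\
  ~ (exists g : K -> {x | X x}, forall a b, g a = g b -> a = b).

Definition saturated (K : Type) : Prop :=
  forall (A : U -> Prop) p, card_lt A K -> params_in A p -> fin_sat_n 1 p ->
    exists e, realizes_n 1 e p.

Definition automorphism (g : U -> U) : Prop :=
  (forall a b, g a = g b -> a = b) /\ (forall b, exists a, g a = b) /\
  (forall f a, g (st_fun S f a) = st_fun S f (fun i => g (a i))) /\
  (forall r a, st_rel S r a <-> st_rel S r (fun i => g (a i))).

Definition homogeneous (K : Type) : Prop :=
  forall (A : U -> Prop) (h : U -> U), card_lt A K ->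
    (forall phi (s : nat -> U), (forall k, A (s k)) ->
       (sat s phi <-> sat (fun k => h (s k)) phi)) ->
    exists g, automorphism g /\ forall a, A a -> g a = h a.

End Sem.

Definition small {U} (K : Type) (X : U -> Prop) := card_lt X K.

(* S is a monster model with respect to the (infinite, > |L|) cardinal |K|. *)
Definition monster {L U} (S : structure L U) (K : Type) : Prop :=
  (exists f : nat -> K, forall a b, f a = f b -> a = b) /\
  (exists f : funs L -> K, forall a b, f a = f b -> a = b) /\
  (exists f : rels L -> K, forall a b, f a = f b -> a = b) /\
  saturated S K /\ homogeneous S K.

Definition disj_union {U} (B B1 B2 : U -> Prop) : Prop :=
  (forall u, B u <-> B1 u \/ B2 u) /\ (forall u, B1 u -> B2 u -> False).

(* The direction  <A,B1,B2> => <B1,B2>  is monotonicity of "tp(X/D) is f.s. in M"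
   (shrinking X or D preserves it).  The converse reduces to one lemma,
   [fs_add_parameters]: if tp(X/D) is f.s. in M, D contains a full C ⊇ M, and
   X1, X2 ⊆ X, then tp(X2/C X1) f.s. in M implies tp(X2/D X1) f.s. in M.
   Given phi(b2, b1, d) we replace the D-parameters d by a tuple c in C of the
   same type over M (fullness, [full_realizes_type]); the invariance lemma
   [fs_swap] (if tp(X/D) is f.s. in M then d ≡_M c implies x d ≡ x c for x in X)
   moves phi to phi(b2, b1, c), the hypothesis gives phi(m, b1, c) with m in M,
   and [fs_swap] moves it back to phi(m, b1, d). *)
From Stdlib Require Import List Arith Lia Classical ClassicalEpsilon FunctionalExtensionality.
Import ListNotations.
Local Open Scope bool_scope.

Definition truth (P : Prop) : bool :=
  if excluded_middle_informative P then true else false.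

Lemma truth_true (P : Prop) : truth P = true <-> P.
Proof. unfold truth; destruct (excluded_middle_informative P); split; congruence || tauto. Qed.

Lemma truth_false (P : Prop) : truth P = false <-> ~ P.
Proof. unfold truth; destruct (excluded_middle_informative P); split; congruence || tauto. Qed.

Definition mix {U} (q : nat -> bool) (s r : nat -> U) : nat -> U :=
  fun k => if q k then s k else r k.

Fixpoint fin_max (n : nat) : (Fin.t n -> nat) -> nat :=
  match n with
  | 0 => fun _ => 0
  | S n' => fun g => Nat.max (g Fin.F1) (fin_max n' (fun i => g (Fin.FS i)))
  end.

Lemma fin_max_ge n (i : Fin.t n) : forall g : Fin.t n -> nat, g i <= fin_max n g.
Proof.
  induction i; intros g; simpl.
  - lia.
  - specialize (IHi (fun j => g (Fin.FS j))). simpl in IHi. lia.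
Qed.

Fixpoint tbound {L} (t : term L) : nat :=
  match t with
  | Var n => S n
  | App f a => fin_max _ (fun i => tbound (a i))
  end.

Fixpoint fbound {L} (phi : formula L) : nat :=
  match phi with
  | FEq t1 t2 => Nat.max (tbound t1) (tbound t2)
  | FRel r a => fin_max _ (fun i => tbound (a i))
  | FNeg p => fbound p
  | FAnd p q => Nat.max (fbound p) (fbound q)
  | FEx _ p => fbound p
  end.

(* Renaming the variables of [ks] to the block above [off]: the formula
   exists x_k (x_k = x_(off+k) /\ ...) for every k in ks. *)
Fixpoint subst_list {L} (ks : list nat) (off : nat) (phi : formula L) : formula L :=
  match ks with
  | [] => phi
  | k :: ks' => FEx k (FAnd (FEq (Var k) (Var (off + k))) (subst_list ks' off phi))
  end.

Section Syntax.
Context {L : lang} {U : Type} (S : structure L U).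

Lemma eval_agree (t : term L) :
  forall s s', (forall k, k < tbound t -> s k = s' k) -> eval S s t = eval S s' t.
Proof.
  induction t as [n|f a IH]; intros s s' H; simpl in *.
  - apply H; lia.
  - f_equal. apply functional_extensionality. intros i. apply IH.
    intros k Hk. apply H. pose proof (fin_max_ge _ i (fun i => tbound (a i))). simpl in *. lia.
Qed.

Lemma sat_in_agree (phi : formula L) :
  forall P s s', (forall k, k < fbound phi -> s k = s' k) ->
  (sat_in S P s phi <-> sat_in S P s' phi).
Proof.
  induction phi as [t1 t2|r a|p IH|p IHp q IHq|n p IH]; intros P s s' H; simpl in *.
  - rewrite (eval_agree t1 s s'), (eval_agree t2 s s'); [tauto| |];
      intros k Hk; apply H; lia.
  - replace (fun i => eval S s (a i)) with (fun i => eval S s' (a i)); [tauto|].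
    apply functional_extensionality; intros i. symmetry. apply eval_agree.
    intros k Hk. apply H. pose proof (fin_max_ge _ i (fun i => tbound (a i))). simpl in *. lia.
  - rewrite (IH P s s' H). tauto.
  - rewrite (IHp P s s'), (IHq P s s'); [tauto| |]; intros k Hk; apply H; lia.
  - assert (Hu : forall u, sat_in S P (upd s n u) p <-> sat_in S P (upd s' n u) p).
    { intros u. apply IH. intros k Hk; unfold upd; destruct (Nat.eqb k n); auto. }
    split; intros [u [Pu Hp]]; exists u; split; auto; apply Hu; auto.
Qed.

Lemma sat_agree (phi : formula L) s s' :
  (forall k, k < fbound phi -> s k = s' k) -> (sat S s phi <-> sat S s' phi).
Proof. apply sat_in_agree. Qed.

Lemma sat_ex_eq (psi : formula L) k m s : k <> m ->
  (sat S s (FEx k (FAnd (FEq (Var k) (Var m)) psi)) <-> sat S (upd s k (s m)) psi).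
Proof.
  intros Hkm. unfold sat; simpl.
  assert (Ek : forall u, upd s k u k = u) by (intros u; unfold upd; rewrite Nat.eqb_refl; auto).
  assert (Em : forall u, upd s k u m = s m).
  { intros u; unfold upd. destruct (Nat.eqb_spec m k); [congruence|auto]. }
  split.
  - intros [u [_ [Heq Hpsi]]]. rewrite Ek, Em in Heq. subst u. exact Hpsi.
  - intros Hpsi. exists (s m). rewrite Ek, Em. auto.
Qed.

Lemma sat_rename (phi : formula L) off : forall ks t g,
  (forall k, In k ks -> k < off) ->
  (forall j, In j ks -> t (off + j) = g j) ->
  (forall j, j < fbound phi -> ~ In j ks -> t j = g j) ->
  (sat S t (subst_list ks off phi) <-> sat S g phi).
Proof.
  induction ks as [|k ks IH]; intros t g Hks Hoff Hrest; simpl.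
  - apply sat_agree. intros j Hj. apply Hrest; auto.
  - assert (Hk : k < off) by (apply Hks; left; auto).
    rewrite sat_ex_eq by lia. apply IH.
    + intros j Hj. apply Hks; right; auto.
    + intros j Hj. unfold upd. destruct (Nat.eqb_spec (off + j) k); [lia|].
      apply Hoff; right; auto.
    + intros j Hj Hn. unfold upd. destruct (Nat.eqb_spec j k).
      * subst. apply Hoff; left; auto.
      * apply Hrest; auto. intros [E|E]; [congruence|contradiction].
Qed.

End Syntax.

Section FiniteSatisfiability.
Context {L : lang} {U : Type} (S : structure L U).

Definition same_type (M : U -> Prop) (q : nat -> bool) (s t : nat -> U) : Prop :=
  forall phi r, (forall k, M (r k)) ->
    (sat S (mix q s r) phi <-> sat S (mix q t r) phi).

Lemma same_type_sym M q s t : same_type M q s t -> same_type M q t s.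
Proof. intros H phi r Hr. rewrite (H phi r Hr). tauto. Qed.

Lemma same_type_ext M q s s' t :
  (forall k, q k = true -> s' k = s k) -> same_type M q s t -> same_type M q s' t.
Proof.
  intros Hs H phi r Hr.
  replace (mix q s' r) with (mix q s r); [apply H; auto|].
  apply functional_extensionality; intros k; unfold mix.
  destruct (q k) eqn:E; auto. symmetry; auto.
Qed.

Lemma mix_as_override (M : U -> Prop) N (q : nat -> bool) (r : nat -> U) phi :
  (forall k, q k = true -> k < N) -> (forall k, M (r k)) ->
  exists theta t, (forall k, M (t k)) /\
    forall f, sat S (override N f t) theta <-> sat S (mix q f r) phi.
Proof.
  intros Hq Hr. set (off := N + fbound phi).
  exists (subst_list (filter (fun k => negb (q k)) (seq 0 N)) off phi),
         (fun j => r (if j <? off then j else j - off)).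
  split; [intros; apply Hr|]. intros f. apply sat_rename.
  - intros k Hk. apply filter_In in Hk as [Hk _]. apply in_seq in Hk. lia.
  - intros j Hj. apply filter_In in Hj as [Hj Hqj]. apply in_seq in Hj.
    unfold override, mix.
    destruct (Nat.ltb_spec (off + j) N); [lia|].
    destruct (Nat.ltb_spec (off + j) off); [lia|].
    replace (off + j - off) with j by lia. destruct (q j); [discriminate|reflexivity].
  - intros j Hj Hnin. unfold override, mix. destruct (Nat.ltb_spec j N).
    + destruct (q j) eqn:E; [reflexivity|]. exfalso. apply Hnin, filter_In.
      split; [apply in_seq; lia|rewrite E; reflexivity].
    + destruct (q j) eqn:E; [apply Hq in E; lia|].
      destruct (Nat.ltb_spec j off); [reflexivity|lia].
Qed.

Lemma full_realizes_type (M C : U -> Prop) N (q : nat -> bool) s :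
  full S M C -> (forall k, q k = true -> k < N) ->
  exists e, (forall k, q k = true -> C (e k)) /\ same_type M q s e.
Proof.
  intros Hfull Hq.
  set (p := fun x : formula L * (nat -> U) =>
              (forall k, M (snd x k)) /\ sat S (override N s (snd x)) (fst x)).
  assert (Htype : complete_type S M N p).
  { split; [|split].
    - intros phi t [Ht _] k. exact (Ht k).
    - intros l Hl. exists s. intros phi t Hin. exact (proj2 (Hl _ Hin)).
    - intros phi t Ht. destruct (classic (sat S (override N s t) phi));
        [left|right]; split; auto. }
  destruct (Hfull N p Htype) as [e [HeC Hreal]].
  exists e. split; [intros k Hk; apply HeC, Hq; auto|].
  intros phi r Hr.
  destruct (mix_as_override M N q r phi Hq Hr) as [theta [t [Ht Htheta]]].
  rewrite <- (Htheta s), <- (Htheta e). split.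
  - intros H. apply (Hreal theta t). split; auto.
  - intros H. apply NNPP. intros Hn.
    exact (Hreal (FNeg theta) t (conj Ht Hn) H).
Qed.

Lemma fs_mono (M X D X' D' : U -> Prop) :
  fs_in S M X D -> (forall u, X' u -> X u) -> (forall u, D' u -> D u) ->
  fs_in S M X' D'.
Proof. intros H HX HD phi s V H1 H2 H3. apply H; auto. Qed.

Lemma fs_in_local (M X D : U -> Prop) m0 :
  M m0 -> (forall u, M u -> D u) -> fs_in S M X D ->
  forall phi s V,
    (forall v, In v V -> v < fbound phi -> X (s v)) ->
    (forall v, ~ In v V -> v < fbound phi -> D (s v)) ->
    sat S s phi ->
    exists s', (forall v, In v V -> M (s' v)) /\
               (forall v, ~ In v V -> s' v = s v) /\ sat S s' phi.
Proof.
  intros Hm0 HMD Hfs phi s V HV HnV Hsat. set (N := fbound phi).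
  set (V' := filter (fun v => v <? N) V).
  assert (HV' : forall v, In v V' <-> In v V /\ v < N).
  { intros v. unfold V'. rewrite filter_In, Nat.ltb_lt. tauto. }
  destruct (Hfs phi (fun j => if j <? N then s j else m0) V')
    as [s' [HV's [Hs'o Hs'sat]]].
  - intros v Hv. apply HV' in Hv as [Hv HvN].
    destruct (Nat.ltb_spec v N); [apply HV; auto|lia].
  - intros v Hv. destruct (Nat.ltb_spec v N); auto.
    apply HnV; auto. intros Hin. apply Hv, HV'; auto.
  - revert Hsat. apply sat_agree. intros k Hk. destruct (Nat.ltb_spec k N); lia || auto.
  - exists (fun v => if truth (In v V) then (if v <? N then s' v else m0) else s v).
    split; [|split].
    + intros v Hv. rewrite (proj2 (truth_true _) Hv).
      destruct (Nat.ltb_spec v N); auto. apply HV's, HV'; auto.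
    + intros v Hv. rewrite (proj2 (truth_false _) Hv). reflexivity.
    + revert Hs'sat. apply sat_agree. intros k Hk.
      destruct (Nat.ltb_spec k N); [|unfold N in *; lia].
      destruct (truth (In k V)) eqn:E.
      * reflexivity.
      * apply truth_false in E. rewrite Hs'o; [|rewrite HV'; tauto].
        destruct (Nat.ltb_spec k N); [reflexivity|lia].
Qed.

Lemma fs_swap (M X D : U -> Prop) m0 (q : nat -> bool) s t phi :
  M m0 -> (forall u, M u -> D u) -> fs_in S M X D -> same_type M q s t ->
  (forall k, k < fbound phi -> q k = true -> D (s k) /\ D (t k)) ->
  (forall k, k < fbound phi -> q k = false -> X (s k) \/ M (s k)) ->
  sat S s phi -> sat S (mix q t s) phi.
Proof.
  intros Hm0 HMD Hfs Hst Hq Hnq Hs. apply NNPP. intros Hn.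
  set (N := fbound phi).
  set (qs := filter q (seq 0 N)).
  assert (Hqs : forall k, In k qs <-> k < N /\ q k = true).
  { intros k. unfold qs. rewrite filter_In, in_seq. intuition lia. }
  (* [s] and [t] side by side: [s] below N, the [q]-part of [t] in [N, 2N). *)
  set (s2 := fun j => if j <? N then s j
                      else if (j - N <? N) && q (j - N) then t (j - N) else m0).
  set (W := filter (fun k => truth (k < N /\ q k = false /\ ~ M (s k))) (seq 0 N)).
  assert (HW : forall k, In k W <-> k < N /\ q k = false /\ ~ M (s k)).
  { intros k. unfold W. rewrite filter_In, in_seq, truth_true. intuition lia. }
  (* [chi] says: phi holds here, but fails once the [q]-part is replaced by
     the copy in [N, 2N). *)
  set (chi := FAnd phi (FNeg (subst_list qs N phi))).
  assert (Hren : forall g h, (forall j, j < N -> q j = true -> g (N + j) = t j) ->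
                 (forall j, j < N -> q j = false -> g j = h j) ->
                 (sat S g (subst_list qs N phi) <-> sat S (mix q t h) phi)).
  { intros g h Hg Hh. apply sat_rename.
    - intros k Hk. apply Hqs in Hk. lia.
    - intros j Hj. apply Hqs in Hj as [Hj Hqj]. unfold mix. rewrite Hqj. auto.
    - intros j Hj Hnin. unfold mix. destruct (q j) eqn:E.
      + exfalso. apply Hnin, Hqs. auto.
      + apply Hh; auto. }
  destruct (Hfs chi s2 W) as [s3 [H3W [H3o H3sat]]].
  - intros v Hv. apply HW in Hv as [HvN [Hqv HvM]]. unfold s2.
    destruct (Nat.ltb_spec v N); [|lia]. destruct (Hnq v HvN Hqv); tauto.
  - intros v Hv. unfold s2. destruct (Nat.ltb_spec v N).
    + destruct (q v) eqn:E; [apply (Hq v); auto|].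
      apply HMD. apply NNPP. intros HvM. apply Hv, HW. auto.
    + destruct (Nat.ltb_spec (v - N) N); simpl; [|auto].
      destruct (q (v - N)) eqn:E; [apply (Hq (v - N)); auto|auto].
  - change (sat S s2 phi /\ ~ sat S s2 (subst_list qs N phi)). split.
    + revert Hs. apply sat_agree. intros k Hk. unfold s2.
      destruct (Nat.ltb_spec k N); [reflexivity|unfold N in *; lia].
    + rewrite (Hren s2 s); auto.
      * intros j Hj Hqj. unfold s2. destruct (Nat.ltb_spec (N + j) N); [lia|].
        replace (N + j - N) with j by lia. rewrite Hqj.
        destruct (Nat.ltb_spec j N); [reflexivity|lia].
      * intros j Hj _. unfold s2. destruct (Nat.ltb_spec j N); [reflexivity|lia].
  - change (sat S s3 phi /\ ~ sat S s3 (subst_list qs N phi)) in H3sat.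
    destruct H3sat as [H3phi H3ren].
    set (r := fun k => if (k <? N) && negb (q k) then s3 k else m0).
    assert (Hr : forall k, M (r k)).
    { intros k. unfold r. destruct (Nat.ltb_spec k N); simpl; [|auto].
      destruct (q k) eqn:E; simpl; [auto|].
      destruct (classic (In k W)) as [Hk|Hk]; [apply H3W; auto|].
      rewrite H3o by auto. unfold s2. destruct (Nat.ltb_spec k N); [|lia].
      apply NNPP. intros HkM. apply Hk, HW. auto. }
    assert (Hsr : sat S (mix q s r) phi).
    { revert H3phi. apply sat_agree. intros k Hk. unfold mix, r.
      destruct (Nat.ltb_spec k N); [|unfold N in *; lia].
      destruct (q k) eqn:E; simpl; [|reflexivity].
      rewrite H3o; [|rewrite HW; intros [_ [E' _]]; congruence].
      unfold s2. destruct (Nat.ltb_spec k N); [reflexivity|lia]. }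
    apply H3ren. rewrite (Hren s3 r).
    + apply (Hst phi r Hr). exact Hsr.
    + intros j Hj Hqj. rewrite H3o; [|rewrite HW; lia].
      unfold s2. destruct (Nat.ltb_spec (N + j) N); [lia|].
      replace (N + j - N) with j by lia. rewrite Hqj.
      destruct (Nat.ltb_spec j N); [reflexivity|lia].
    + intros j Hj Hqj. unfold r. rewrite Hqj.
      destruct (Nat.ltb_spec j N); [reflexivity|lia].
Qed.

Lemma fs_add_parameters (M C D X X1 X2 : U -> Prop) m0 :
  M m0 -> full S M C -> (forall u, M u -> C u) -> (forall u, C u -> D u) ->
  (forall u, X1 u -> X u) -> (forall u, X2 u -> X u) ->
  fs_in S M X D -> fs_in S M X2 (fun u => C u \/ X1 u) ->
  fs_in S M X2 (fun u => D u \/ X1 u).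
Proof.
  intros Hm0 Hfull HMC HCD HX1 HX2 HX H2 phi s V HV HnV Hsat.
  set (N := fbound phi).
  (* the coordinates carrying D-parameters outside X1 *)
  set (q := fun k => truth (k < N /\ ~ In k V /\ ~ X1 (s k))).
  assert (Hq : forall k, q k = true <-> k < N /\ ~ In k V /\ ~ X1 (s k))
    by (intros k; apply truth_true).
  assert (Hnq : forall k, k < N -> q k = false -> In k V \/ X1 (s k)).
  { intros k Hk E. apply truth_false in E.
    destruct (classic (In k V)); [left; auto|right; apply NNPP; tauto]. }
  assert (HqD : forall k, q k = true -> D (s k)).
  { intros k Hk. apply Hq in Hk as [_ [Hv Hx]]. destruct (HnV k Hv); tauto. }
  destruct (full_realizes_type M C N q s Hfull) as [e [HeC Hse]];
    [intros k Hk; apply Hq in Hk; tauto|].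
  (* move phi(b2, b1, d) to phi(b2, b1, c) with c in C *)
  assert (Hs1 : sat S (mix q e s) phi).
  { refine (fs_swap M X D m0 q s e phi Hm0 (fun u Hu => HCD u (HMC u Hu)) HX Hse _ _ Hsat).
    - intros k _ Hk. split; [apply HqD|apply HCD, HeC]; auto.
    - intros k Hk E. left. destruct (Hnq k Hk E); auto. }
  (* use tp(X2 / C X1) to find phi(m, b1, c) with m in M *)
  assert (Hs1V : forall v, In v V -> v < N -> X2 (mix q e s v)).
  { intros v Hv _. unfold mix. destruct (q v) eqn:E; [apply Hq in E; tauto|auto]. }
  assert (Hs1nV : forall v, ~ In v V -> v < N -> C (mix q e s v) \/ X1 (mix q e s v)).
  { intros v Hv HvN. unfold mix. destruct (q v) eqn:E; [left; auto|].
    right. destruct (Hnq v HvN E); tauto. }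
  destruct (fs_in_local M X2 (fun u => C u \/ X1 u) m0 Hm0 (fun u Hu => or_introl (HMC u Hu))
              H2 phi (mix q e s) V Hs1V Hs1nV Hs1) as [s2 [H2V [H2o Hs2]]].
  assert (H2e : forall k, q k = true -> s2 k = e k).
  { intros k Hk. rewrite H2o; [unfold mix; rewrite Hk; auto|]. apply Hq in Hk; tauto. }
  (* move phi(m, b1, c) back to phi(m, b1, d) *)
  exists (mix q s s2). split; [|split].
  - intros v Hv. unfold mix. destruct (q v) eqn:E; [apply Hq in E; tauto|auto].
  - intros v Hv. unfold mix. destruct (q v) eqn:E; auto.
    rewrite H2o by auto. unfold mix. rewrite E. auto.
  - refine (fs_swap M X D m0 q s2 s phi Hm0 (fun u Hu => HCD u (HMC u Hu)) HX _ _ _ Hs2).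
    + apply same_type_ext with (s := e); auto. apply same_type_sym; auto.
    + intros k _ Hk. rewrite H2e by auto. split; [apply HCD, HeC|apply HqD]; auto.
    + intros k Hk E. destruct (classic (In k V)) as [Hv|Hv]; [right; apply H2V; auto|].
      left. rewrite H2o by auto. unfold mix. rewrite E.
      destruct (Hnq k Hk E); [contradiction|auto].
Qed.

End FiniteSatisfiability.

Theorem lemma2 (L : lang) (U : Type) (S : structure L U) (K : Type)
  (Hmon : monster S K)
  (M C A B B1 B2 : U -> Prop)
  (HM : elem_sub S M) (HMsmall : small K M)
  (HMC : forall u, M u -> C u) (Hfull : full S M C)
  (HAB : fs_seq S M C [A; B])
  (Hpart : disj_union B B1 B2) :
  fs_seq S M C [A; B1; B2] <-> fs_seq S M C [B1; B2].
Proof.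
  destruct HM as [[m0 Hm0] _]. destruct Hpart as [HB _].
  assert (HB1 : forall u, B1 u -> B u) by (intros u Hu; apply HB; auto).
  assert (HB2 : forall u, B2 u -> B u) by (intros u Hu; apply HB; auto).
  unfold fs_seq in *; simpl in *. destruct HAB as [HA [HBf _]].
  split.
  - intros [_ [H1 [H2 _]]]. repeat split.
    + apply (fs_mono S M B1 (fun u => C u \/ A u)); auto.
    + apply (fs_mono S M B2 (fun u => (C u \/ A u) \/ B1 u)); auto. tauto.
  - intros [_ [H2 _]]. repeat split; auto.
    + apply (fs_mono S M B (fun u => C u \/ A u)); auto.
    + apply (fs_add_parameters S M C (fun u => C u \/ A u) B B1 B2 m0); auto.
Qed.
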